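(* Fix $V_{\sf P}\ge0$. Then $$\lim_{\delta\to1}\lim_{p\to0}\frac{{\sf Eng}({\sf PEAR})}{{\sf Eng}({\sf APP})}=1,\qquad \lim_{\delta\to1}\lim_{p\to0}\frac{{\sf Util}({\sf PEAR})}{{\sf Util}({\sf APP})}=1+\frac{1}{\ln(1+2e^{V_{\sf P}})}.$$
   Context: Model. Time $t=0,1,2,\dots$, discount factor $\delta\in[0,1)$. Two item types, popular ${\sf P}$ and niche ${\sf N}$, infinitely many items each; at each time $t$ the platform recommends a set $\pi_t$ of two fresh items of chosen types. Utility of item $i$: $u_i=V_{\tau(i)}+\epsilon_i$; outside option: $u_\emptyset=\epsilon_\emptyset$; all noises i.i.d. Gumbel with scale $1$ and mean $0$. User chooses $c_t=\arg\max_{j\in\pi_t\cup\{\emptyset\}}u_j$. $V_{\sf P}$ is a known constant; $V_{\sf N}$ is drawn once, fixed over time, independent of noise, with $\mathbb P(V_{\sf N}=(1-p)/p)=p$, $\mathbb P(V_{\sf N}=-1)=1-p$, $p\in(0,1)$. ${\sf Eng}(\pi)=\sum_{t\ge0}\delta^t\mathbb P(c_t\ne\emptyset)$, ${\sf Util}(\pi)=\sum_{t\ge0}\delta^t\mathbb E[\max_{j\in\pi_t\cup\{\emptyset\}}u_j]$ (expectations also over $V_{\sf N}$). ${\sf APP}$ recommends two popular items at every time. Policy ${\sf PEAR}$: let $\rho_1=\frac{e^{(1-p)/p}}{1+e^{V_{\sf P}}+e^{(1-p)/p}}$, $\rho_2=\frac{e^{-1}}{1+e^{V_{\sf P}}+e^{-1}}$.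 Maintain counters $S,F$ (initially $0$) and $p_0=p$. At each time $t$: if $p_t\ge p$, recommend one popular and one niche item; if the niche item is chosen increment $S$, otherwise increment $F$. If $p_t<p$, recommend two popular items. Then set $p_{t+1}=\left(1+\frac{1-p}{p}\cdot\frac{\rho_2^S(1-\rho_2)^F}{\rho_1^S(1-\rho_1)^F}\right)^{-1}$. *)

From Stdlib Require Import Reals.
From Coquelicot Require Import Coquelicot.
Open Scope R_scope.

(* ---------- Multinomial-logit closed forms of the Gumbel choice model ----------
   A recommended set of two items with mean utilities v1, v2, plus the outside
   option (mean utility 0); all noises i.i.d. Gumbel(scale 1, mean 0). *)
Definition denom2 (v1 v2 : R) : R := 1 + exp v1 + exp v2.

Definition prob_choose2 (v1 v2 : R) : R := exp v2 / denom2 v1 v2.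

(* P(c_t <> outside option) *)
Definition prob_engage2 (v1 v2 : R) : R := 1 - 1 / denom2 v1 v2.

(* E[max_{j in pi_t u {outside}} u_j]  (mean-zero Gumbel noise) *)
Definition exp_max_util2 (v1 v2 : R) : R := ln (denom2 v1 v2).

Definition vN_hi (p : R) : R := (1 - p) / p.
Definition vN_lo : R := -1.

Definition rho1 (VP p : R) : R := exp (vN_hi p) / (1 + exp VP + exp (vN_hi p)).
Definition rho2 (VP : R) : R := exp (-1) / (1 + exp VP + exp (-1)).

Definition pear_belief (VP p : R) (S F : nat) : R :=
  match S, F with
  | O, O => p
  | _, _ =>
    / (1 + (1 - p) / p *
           ((rho2 VP ^ S * (1 - rho2 VP) ^ F) /
            (rho1 VP p ^ S * (1 - rho1 VP p) ^ F)))
  end.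

(* Expected discounted reward of PEAR over the first T periods, started from
   counters (S,F), conditionally on V_N = vN; rew v1 v2 is the per-period
   reward of recommending items with mean utilities v1, v2. *)
Fixpoint pear_val (rew : R -> R -> R) (VP p delta vN : R) (T S F : nat) : R :=
  match T with
  | O => 0
  | S T' =>
    if Rle_dec p (pear_belief VP p S F) then
      (* recommend one popular and one niche item *)
      rew VP vN + delta *
        (prob_choose2 VP vN * pear_val rew VP p delta vN T' (S + 1)%nat F
         + (1 - prob_choose2 VP vN) * pear_val rew VP p delta vN T' S (F + 1)%nat)
    else
      (* recommend two popular items; counters unchanged *)
      rew VP VP + delta * pear_val rew VP p delta vN T' S F
  end.

Definition pear_obj (rew : R -> R -> R) (VP delta p : R) : R :=
  p * real (Lim_seq (fun T => pear_val rew VP p delta (vN_hi p) T 0 0))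
  + (1 - p) * real (Lim_seq (fun T => pear_val rew VP p delta vN_lo T 0 0)).

(* APP: two popular items every period. *)
Fixpoint app_val (rew : R -> R -> R) (VP delta : R) (T : nat) : R :=
  match T with
  | O => 0
  | S T' => rew VP VP + delta * app_val rew VP delta T'
  end.

Definition app_obj (rew : R -> R -> R) (VP delta : R) : R :=
  real (Lim_seq (fun T => app_val rew VP delta T)).

Definition Eng_PEAR (VP delta p : R) : R := pear_obj prob_engage2 VP delta p.
Definition Util_PEAR (VP delta p : R) : R := pear_obj exp_max_util2 VP delta p.
Definition Eng_APP (VP delta : R) : R := app_obj prob_engage2 VP delta.
Definition Util_APP (VP delta : R) : R := app_obj exp_max_util2 VP delta.

From Stdlib Require Import Reals Lra Lia.
From Coquelicot Require Import Coquelicot.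
Open Scope R_scope.

(* When V_N = -1, PEAR's belief stays at least p while the niche item has never been rejected,
   but for small p a single rejection pushes it below p over any fixed horizon. So as p -> 0,
   PEAR behaves like "explore until the first failure", whose value solves a linear fixed-point
   equation and, multiplied by 1 - delta, tends to APP's per-period reward b as delta -> 1.
   When V_N = (1 - p) / p, which has probability p, the weighted contribution tends to 0 for
   engagement (rewards are at most 1) and to 1 / (1 - delta) for utility (rewards are about
   1 / p). Dividing by APP's value b / (1 - delta) gives the limits 1 and (1 + b) / b. *)

Lemma Rabs_convex_le q x y c :
  0 <= q <= 1 -> Rabs x <= c -> Rabs y <= c -> Rabs (q * x + (1 - q) * y) <= c.
Proof.
  intros Hq Hx Hy. apply Rabs_le_between in Hx, Hy. apply Rabs_le. nra.
Qed.

Lemma pow_antimono x m n : 0 <= x <= 1 -> (m <= n)%nat -> x ^ n <= x ^ m.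
Proof.
  intros Hx Hmn. replace n with (m + (n - m))%nat by lia. rewrite pow_add.
  assert (x ^ (n - m) <= 1) by (rewrite <- (pow1 (n - m)); apply pow_incr; lra).
  pose proof (pow_le x m (proj1 Hx)). nra.
Qed.

Lemma Rdiv_le_compat x x' y y' : 0 <= x <= x' -> 0 < y' <= y -> x / y <= x' / y'.
Proof.
  intros Hx Hy. unfold Rdiv. apply Rmult_le_compat; try lra.
  - apply Rlt_le, Rinv_0_lt_compat; lra.
  - apply Rinv_le_contravar; lra.
Qed.

Lemma geom_tail_small M dl eps :
  0 <= M -> 0 <= dl < 1 -> 0 < eps -> exists N, M * dl ^ N / (1 - dl) < eps.
Proof.
  intros HM Hdl He.
  destruct (pow_lt_1_zero dl ltac:(rewrite Rabs_pos_eq; lra) (eps * (1 - dl) / (M + 1)))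
    as [N HN]; [apply Rdiv_lt_0_compat; nra|].
  exists N. specialize (HN N (le_n N)). rewrite Rabs_pos_eq in HN by (apply pow_le; lra).
  apply Rlt_div_l; [lra|].
  apply Rmult_lt_compat_r with (r := M + 1) in HN; [|lra].
  replace (eps * (1 - dl) / (M + 1) * (M + 1)) with (eps * (1 - dl)) in HN by (field; lra).
  pose proof (pow_le dl N (proj1 Hdl)). nra.
Qed.

Lemma Lim_seq_dist_le (u v : nat -> R) c :
  ex_finite_lim_seq u -> ex_finite_lim_seq v -> (forall n, Rabs (u n - v n) <= c) ->
  Rabs (Lim_seq u - Lim_seq v) <= c.
Proof.
  intros [lu Hu] [lv Hv] H.
  rewrite (is_lim_seq_unique _ _ Hu), (is_lim_seq_unique _ _ Hv).
  pose proof (is_lim_seq_abs _ _ (is_lim_seq_minus' _ _ _ _ Hu Hv)) as Hd.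
  exact (is_lim_seq_le _ _ _ _ H Hd (is_lim_seq_const c)).
Qed.

Lemma filterlim_Rplus {T} {F : (T -> Prop) -> Prop} {FF : Filter F} (f g : T -> R) x y :
  filterlim f F (locally x) -> filterlim g F (locally y) ->
  filterlim (fun t => f t + g t) F (locally (x + y)).
Proof. intros Hf Hg. eapply filterlim_comp_2; eauto. apply (filterlim_plus x y). Qed.

Lemma filterlim_Rmult {T} {F : (T -> Prop) -> Prop} {FF : Filter F} (f g : T -> R) x y :
  filterlim f F (locally x) -> filterlim g F (locally y) ->
  filterlim (fun t => f t * g t) F (locally (x * y)).
Proof. intros Hf Hg. eapply filterlim_comp_2; eauto. apply (filterlim_mult x y). Qed.

Lemma filterlim_within_continuity (g : R -> R) (D : R -> Prop) x :
  continuity_pt g x -> filterlim g (within D (locally x)) (locally (g x)).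
Proof.
  intro H. apply continuity_pt_filterlim in H.
  eapply filterlim_filter_le_1; [apply filter_le_within | exact H].
Qed.

Lemma at_right_0_lt eta : 0 < eta -> at_right 0 (fun p => 0 < p < eta).
Proof.
  intro He. exists (mkposreal eta He). intros y Hy Hpos. split; [exact Hpos|].
  change (Rabs (y - 0) < eta) in Hy. rewrite Rminus_0_r, Rabs_pos_eq in Hy; lra.
Qed.

Fixpoint const_val (b dl : R) (T : nat) : R :=
  match T with
  | O => 0
  | S T' => b + dl * const_val b dl T'
  end.

Lemma is_lim_seq_const_val b dl :
  0 <= dl < 1 -> is_lim_seq (const_val b dl) (b / (1 - dl)).
Proof.
  intro Hdl.
  apply is_lim_seq_ext with (u := fun T => b / (1 - dl) * (1 - dl ^ T)).
  { intro T; induction T as [|T IH]; simpl; rewrite <- ?IH; field; lra. }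
  assert (Hgeom : Rabs dl < 1) by (rewrite Rabs_pos_eq; lra).
  pose proof (is_lim_seq_scal_l _ (b / (1 - dl)) _
    (is_lim_seq_minus' _ _ _ _ (is_lim_seq_const 1) (is_lim_seq_geom dl Hgeom))) as K.
  simpl in K. rewrite Rminus_0_r, Rmult_1_r in K. exact K.
Qed.

(* Counters [s, f] of niche successes and failures; [d s f = true] means recommending one popular
   and one niche item (reward [a], niche chosen with probability [q]), [false] two popular items
   (reward [b]). *)
Fixpoint explore_val (d : nat -> nat -> bool) (a b q dl : R) (T s f : nat) : R :=
  match T with
  | O => 0
  | S T' =>
    if d s f
    then a + dl * (q * explore_val d a b q dl T' (s + 1) f
                   + (1 - q) * explore_val d a b q dl T' s (f + 1))
    else b + dl * explore_val d a b q dl T' s f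
  end.

Lemma explore_val_S d a b q dl T s f :
  explore_val d a b q dl (S T) s f =
  if d s f
  then a + dl * (q * explore_val d a b q dl T (s + 1) f
                 + (1 - q) * explore_val d a b q dl T s (f + 1))
  else b + dl * explore_val d a b q dl T s f.
Proof. reflexivity. Qed.

Definition explore_obj (d : nat -> nat -> bool) (a b q dl : R) (s f : nat) : R :=
  real (Lim_seq (fun T => explore_val d a b q dl T s f)).

Lemma explore_val_exploit d a b q dl T s f :
  d s f = false -> explore_val d a b q dl T s f = const_val b dl T.
Proof. intro Hd; induction T as [|T IH]; simpl; rewrite ?Hd, ?IH; reflexivity. Qed.

Definition until_failure (s f : nat) : bool := Nat.eqb f 0.

Definition until_failure_rate (a b q dl : R) : R :=
  ((1 - dl) * a + dl * (1 - q) * b) / (1 - dl * q).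

Section ExploreValue.

Variables (a b q dl : R).
Hypotheses (Ha : 0 <= a) (Hb : 0 <= b) (Hq : 0 <= q <= 1) (Hdl : 0 <= dl < 1).

Local Notation V d := (explore_val d a b q dl).

Lemma explore_val_ge0 d T s f : 0 <= V d T s f.
Proof.
  revert s f; induction T as [|T IH]; intros s f; simpl; [lra|].
  destruct (d s f).
  - pose proof (IH (s + 1)%nat f); pose proof (IH s (f + 1)%nat).
    assert (0 <= q * V d T (s + 1) f + (1 - q) * V d T s (f + 1)) by nra. nra.
  - pose proof (IH s f); nra.
Qed.

Lemma explore_val_le M d T s f : a <= M -> b <= M -> V d T s f <= M / (1 - dl).
Proof.
  intros HaM HbM. assert (E : M / (1 - dl) = M + dl * (M / (1 - dl))) by (field; lra).
  revert s f; induction T as [|T IH]; intros s f; simpl.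
  - apply Rdiv_le_0_compat; lra.
  - rewrite E. destruct (d s f).
    + pose proof (IH (s + 1)%nat f); pose proof (IH s (f + 1)%nat).
      assert (q * V d T (s + 1) f + (1 - q) * V d T s (f + 1) <= M / (1 - dl)) by nra.
      nra.
    + pose proof (IH s f); nra.
Qed.

Lemma explore_val_incr d T s f : V d T s f <= V d (S T) s f.
Proof.
  revert s f; induction T as [|T IH]; intros s f.
  - simpl. destruct (d s f); ring_simplify; lra.
  - rewrite (explore_val_S d a b q dl T s f), (explore_val_S d a b q dl (S T) s f).
    destruct (d s f); apply Rplus_le_compat_l, Rmult_le_compat_l; try lra.
    + pose proof (IH (s + 1)%nat f); pose proof (IH s (f + 1)%nat). nra.
    + apply IH.
Qed.

Lemma ex_finite_lim_explore_val d s f : ex_finite_lim_seq (fun T => V d T s f).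
Proof.
  apply ex_finite_lim_seq_incr with (M := (a + b) / (1 - dl)).
  - intro T; apply explore_val_incr.
  - intro T; apply explore_val_le; lra.
Qed.

Lemma is_lim_seq_explore_obj d s f :
  is_lim_seq (fun T => V d T s f) (explore_obj d a b q dl s f).
Proof.
  unfold explore_obj. destruct (ex_finite_lim_explore_val d s f) as [l Hl].
  rewrite (is_lim_seq_unique _ _ Hl). exact Hl.
Qed.

Lemma explore_obj_le M d s f : a <= M -> b <= M -> explore_obj d a b q dl s f <= M / (1 - dl).
Proof.
  intros HaM HbM.
  apply (is_lim_seq_le _ _ _ _ (fun T => explore_val_le M d T s f HaM HbM)
           (is_lim_seq_explore_obj d s f) (is_lim_seq_const _)).
Qed.

Lemma explore_obj_ge0 d s f : 0 <= explore_obj d a b q dl s f.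
Proof.
  apply (is_lim_seq_le _ _ _ _ (fun T => explore_val_ge0 d T s f)
           (is_lim_seq_const _) (is_lim_seq_explore_obj d s f)).
Qed.

(* Along the all-success path every period earns [a] and continues with probability [q]. *)
Lemma const_val_le_explore_val d T s :
  (forall s', d s' 0%nat = true) -> const_val a (dl * q) T <= V d T s 0.
Proof.
  intro Hd. revert s; induction T as [|T IH]; intro s; simpl; [lra|].
  rewrite Hd. pose proof (IH (s + 1)%nat). pose proof (explore_val_ge0 d T s 1).
  assert (dl * q * const_val a (dl * q) T <= dl * q * V d T (s + 1) 0)
    by (apply Rmult_le_compat_l; nra).
  assert (0 <= dl * ((1 - q) * V d T s 1)) by (apply Rmult_le_pos; [|apply Rmult_le_pos]; lra).
  simpl (0 + 1)%nat. nra.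
Qed.

Lemma explore_obj_ge_no_failure d s :
  (forall s', d s' 0%nat = true) -> a / (1 - dl * q) <= explore_obj d a b q dl s 0.
Proof.
  intro Hd. assert (Hdq : 0 <= dl * q < 1) by nra.
  apply (is_lim_seq_le _ _ _ _ (fun T => const_val_le_explore_val d T s Hd)
           (is_lim_seq_const_val a _ Hdq) (is_lim_seq_explore_obj d s 0)).
Qed.

(* [s + f] grows by one per period, so from [(s, f)] the two rules agree for [k] periods. *)
Lemma explore_val_agree_dist M d d' N :
  a <= M -> b <= M -> (forall s f, (s + f < N)%nat -> d s f = d' s f) ->
  forall T s f k, (s + f + k <= N)%nat ->
  Rabs (V d T s f - V d' T s f) <= M * dl ^ k / (1 - dl).
Proof.
  intros HaM HbM Hagree T.
  assert (Hscale : forall x c, Rabs x <= c -> Rabs (dl * x) <= dl * c).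
  { intros x c Hx. rewrite Rabs_mult, Rabs_pos_eq by lra. apply Rmult_le_compat_l; lra. }
  induction T as [|T IH]; intros s f k Hk.
  - simpl. rewrite Rminus_0_r, Rabs_R0.
    apply Rdiv_le_0_compat; [|lra]. pose proof (pow_le dl k (proj1 Hdl)). nra.
  - destruct k as [|k].
    + pose proof (explore_val_ge0 d (S T) s f); pose proof (explore_val_ge0 d' (S T) s f).
      pose proof (explore_val_le M d (S T) s f HaM HbM).
      pose proof (explore_val_le M d' (S T) s f HaM HbM).
      rewrite pow_O, Rmult_1_r. apply Rabs_le. lra.
    + rewrite !explore_val_S, (Hagree s f) by lia.
      replace (M * dl ^ S k / (1 - dl)) with (dl * (M * dl ^ k / (1 - dl))) by (simpl; field; lra).
      destruct (d' s f).
      * match goal with |- Rabs ?e <= _ => replace e with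
          (dl * (q * (V d T (s + 1) f - V d' T (s + 1) f)
                 + (1 - q) * (V d T s (f + 1) - V d' T s (f + 1)))) by ring end.
        apply Hscale, Rabs_convex_le; [exact Hq | apply IH | apply IH]; lia.
      * match goal with |- Rabs ?e <= _ => replace e with
          (dl * (V d T s f - V d' T s f)) by ring end.
        apply Hscale, IH; lia.
Qed.

Lemma explore_val_until_failure_shift T s :
  V until_failure T s 0 = V until_failure T 0 0.
Proof.
  revert s; induction T as [|T IH]; intro s; [reflexivity|].
  rewrite !explore_val_S. simpl until_failure. cbv iota.
  rewrite (IH (s + 1)%nat), (IH (0 + 1)%nat).
  rewrite (explore_val_exploit _ _ _ _ _ T s (0 + 1)),
    (explore_val_exploit _ _ _ _ _ T 0 (0 + 1)) by reflexivity.
  reflexivity.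
Qed.

Lemma explore_val_until_failure_S T :
  V until_failure (S T) 0 0
  = a + dl * (q * V until_failure T 0 0 + (1 - q) * const_val b dl T).
Proof.
  rewrite explore_val_S. simpl until_failure. cbv iota.
  rewrite (explore_val_until_failure_shift T (0 + 1)),
    (explore_val_exploit _ _ _ _ _ T 0 (0 + 1)) by reflexivity.
  reflexivity.
Qed.

Lemma is_lim_seq_until_failure :
  is_lim_seq (fun T => V until_failure T 0 0) (until_failure_rate a b q dl / (1 - dl)).
Proof.
  pose proof (is_lim_seq_explore_obj until_failure 0 0) as Hl.
  set (l := explore_obj until_failure a b q dl 0 0) in Hl.
  assert (Hrec : is_lim_seq (fun T => V until_failure (S T) 0 0)
                   (a + dl * (q * l + (1 - q) * (b / (1 - dl))))).
  { apply (is_lim_seq_ext _ _ _ (fun T => eq_sym (explore_val_until_failure_S T))).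
    apply is_lim_seq_plus'; [apply is_lim_seq_const|].
    apply (is_lim_seq_scal_l _ dl (q * l + (1 - q) * (b / (1 - dl)))).
    apply is_lim_seq_plus'.
    - apply (is_lim_seq_scal_l _ q l), Hl.
    - apply (is_lim_seq_scal_l _ (1 - q) (b / (1 - dl))), is_lim_seq_const_val, Hdl. }
  assert (Hfix : l = a + dl * (q * l + (1 - q) * (b / (1 - dl)))).
  { apply is_lim_seq_incr_1 in Hl.
    pose proof (is_lim_seq_unique _ _ Hl) as E1. pose proof (is_lim_seq_unique _ _ Hrec) as E2.
    rewrite E1 in E2. injection E2. auto. }
  assert (E : l - dl * q * l = a + dl * (1 - q) * (b / (1 - dl))) by (rewrite Hfix at 1; ring).
  assert (0 < 1 - dl * q) by nra.
  replace (until_failure_rate a b q dl / (1 - dl)) with l; [exact Hl|].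
  unfold until_failure_rate.
  replace ((1 - dl) * a + dl * (1 - q) * b) with ((1 - dl) * (l - dl * q * l))
    by (rewrite E; field; lra).
  field. lra.
Qed.

End ExploreValue.

Definition pear_rule (VP p : R) (s f : nat) : bool :=
  if Rle_dec p (pear_belief VP p s f) then true else false.

Lemma pear_val_explore_val rew VP p dl vN T s f :
  pear_val rew VP p dl vN T s f =
  explore_val (pear_rule VP p) (rew VP vN) (rew VP VP) (prob_choose2 VP vN) dl T s f.
Proof.
  revert s f; induction T as [|T IH]; intros s f; [reflexivity|].
  simpl. unfold pear_rule. destruct Rle_dec; rewrite !IH; reflexivity.
Qed.

Lemma pear_val_Lim rew VP p dl vN :
  real (Lim_seq (fun T => pear_val rew VP p dl vN T 0 0)) =
  explore_obj (pear_rule VP p) (rew VP vN) (rew VP VP) (prob_choose2 VP vN) dl 0 0.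
Proof.
  unfold explore_obj. rewrite (Lim_seq_ext _ _ (fun T => pear_val_explore_val rew VP p dl vN T 0 0)).
  reflexivity.
Qed.

Lemma app_obj_eq rew VP dl : 0 <= dl < 1 -> app_obj rew VP dl = rew VP VP / (1 - dl).
Proof.
  intro Hdl. unfold app_obj.
  assert (E : forall T, app_val rew VP dl T = const_val (rew VP VP) dl T)
    by (induction T as [|T IH]; simpl; rewrite ?IH; reflexivity).
  rewrite (Lim_seq_ext (fun T => app_val rew VP dl T) _ E).
  rewrite (is_lim_seq_unique _ _ (is_lim_seq_const_val _ _ Hdl)).
  reflexivity.
Qed.

Lemma prob_choose2_bounds v1 v2 : 0 < prob_choose2 v1 v2 < 1.
Proof.
  unfold prob_choose2, denom2. pose proof (exp_pos v1); pose proof (exp_pos v2).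
  split; [apply Rdiv_lt_0_compat | apply Rlt_div_l]; lra.
Qed.

Lemma prob_choose2_lt v1 v2 v2' : v2 < v2' -> prob_choose2 v1 v2 < prob_choose2 v1 v2'.
Proof.
  intro Hv. unfold prob_choose2, denom2.
  pose proof (exp_pos v1); pose proof (exp_pos v2); pose proof (exp_increasing _ _ Hv).
  set (c := 1 + exp v1). assert (0 < c) by (unfold c; lra).
  replace (exp v2 / (c + exp v2)) with (1 - c / (c + exp v2)) by (field; lra).
  replace (exp v2' / (c + exp v2')) with (1 - c / (c + exp v2')) by (field; lra).
  apply Rplus_lt_compat_l, Ropp_lt_contravar, Rmult_lt_compat_l; [lra|].
  apply Rinv_lt_contravar; nra.
Qed.

Lemma prob_engage2_bounds v1 v2 : 0 < prob_engage2 v1 v2 < 1.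
Proof.
  unfold prob_engage2, denom2. pose proof (exp_pos v1); pose proof (exp_pos v2).
  assert (0 < 1 / (1 + exp v1 + exp v2) < 1)
    by (split; [apply Rdiv_lt_0_compat | apply Rlt_div_l]; lra).
  lra.
Qed.

Lemma exp_max_util2_pos v1 v2 : 0 < exp_max_util2 v1 v2.
Proof.
  unfold exp_max_util2, denom2. rewrite <- ln_1.
  pose proof (exp_pos v1); pose proof (exp_pos v2). apply ln_increasing; lra.
Qed.

Lemma rho2_lt_rho1 VP p : 0 < p < 1 -> rho2 VP < rho1 VP p.
Proof.
  intro Hp. apply (prob_choose2_lt VP vN_lo (vN_hi p)).
  unfold vN_lo, vN_hi. pose proof (Rdiv_le_0_compat (1 - p) p ltac:(lra) ltac:(lra)). lra.
Qed.

Lemma exp_vN_hi_ge p : 0 < p -> / p <= exp (vN_hi p).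
Proof.
  intro Hp. eapply Rle_trans; [|apply exp_ineq1_le]. unfold vN_hi. right. field. lra.
Qed.

Lemma one_sub_rho1_le VP p : 0 < p -> 1 - rho1 VP p <= (1 + exp VP) * p.
Proof.
  intro Hp. pose proof (exp_vN_hi_ge p Hp). pose proof (exp_pos VP). pose proof (Rinv_0_lt_compat p Hp).
  unfold rho1. set (e := exp (vN_hi p)) in *.
  assert (1 <= p * e) by (rewrite <- (Rinv_r p) by lra; apply Rmult_le_compat_l; lra).
  replace (1 - e / (1 + exp VP + e)) with ((1 + exp VP) / (1 + exp VP + e)) by (field; lra).
  apply Rle_div_l; nra.
Qed.

Lemma prior_le_posterior_iff p r :
  0 < p < 1 -> 0 <= r -> p <= / (1 + (1 - p) / p * r) <-> r <= 1.
Proof.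
  intros Hp Hr. assert (0 < p + (1 - p) * r) by nra.
  replace (/ (1 + (1 - p) / p * r)) with (p / (p + (1 - p) * r)) by (field; lra).
  rewrite <- Rle_div_r by lra. assert (Hpp : 0 < p * (1 - p)) by nra.
  split; intro Hle.
  - apply Rnot_lt_le. intro Hr1.
    assert (0 < p * (1 - p) * (r - 1)) by (apply Rmult_lt_0_compat; lra). nra.
  - assert (0 <= p * (1 - p) * (1 - r)) by (apply Rmult_le_pos; lra). nra.
Qed.

Definition likelihood_ratio (VP p : R) (s f : nat) : R :=
  (rho2 VP ^ s * (1 - rho2 VP) ^ f) / (rho1 VP p ^ s * (1 - rho1 VP p) ^ f).

Lemma rho_bounds VP p : 0 < p < 1 -> 0 < rho2 VP < rho1 VP p /\ rho1 VP p < 1.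
Proof.
  intro Hp. pose proof (prob_choose2_bounds VP vN_lo); pose proof (prob_choose2_bounds VP (vN_hi p)).
  pose proof (rho2_lt_rho1 VP p Hp).
  change (prob_choose2 VP vN_lo) with (rho2 VP) in *.
  change (prob_choose2 VP (vN_hi p)) with (rho1 VP p) in *. lra.
Qed.

Lemma likelihood_ratio_ge0 VP p s f : 0 < p < 1 -> 0 <= likelihood_ratio VP p s f.
Proof.
  intro Hp. pose proof (rho_bounds VP p Hp). unfold likelihood_ratio.
  apply Rdiv_le_0_compat; [apply Rmult_le_pos | apply Rmult_lt_0_compat];
    (apply pow_le || apply pow_lt); lra.
Qed.

Lemma pear_rule_true_iff VP p s f : 0 < p < 1 -> (0 < s + f)%nat ->
  pear_rule VP p s f = true <-> likelihood_ratio VP p s f <= 1.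
Proof.
  intros Hp Hsf. pose proof (likelihood_ratio_ge0 VP p s f Hp).
  rewrite <- (prior_le_posterior_iff p (likelihood_ratio VP p s f)) by lra.
  unfold pear_rule. replace (pear_belief VP p s f) with
    (/ (1 + (1 - p) / p * likelihood_ratio VP p s f)) by (destruct s, f; [lia | reflexivity ..]).
  destruct Rle_dec; split; congruence || tauto.
Qed.

Lemma pear_rule_no_failure VP p s : 0 < p < 1 -> pear_rule VP p s 0 = true.
Proof.
  intro Hp. destruct s as [|s].
  - unfold pear_rule. simpl. destruct Rle_dec as [|Hn]; [reflexivity | lra].
  - apply pear_rule_true_iff; [exact Hp | lia |].
    pose proof (rho_bounds VP p Hp). unfold likelihood_ratio. rewrite !pow_O, !Rmult_1_r.
    assert (0 < rho1 VP p ^ S s) by (apply pow_lt; lra).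
    assert (rho2 VP ^ S s <= rho1 VP p ^ S s) by (apply pow_incr; lra).
    apply Rle_div_l; lra.
Qed.

(* After a failure the likelihood ratio is at least [K] up to depth [N], while [1 - rho1 = O(p)]
   makes its denominator smaller than [K] for small [p]. *)
Lemma pear_rule_near_0 VP N :
  at_right 0 (fun p => forall s f, (s + f < N)%nat -> pear_rule VP p s f = until_failure s f).
Proof.
  set (K := (rho2 VP * (1 - rho2 VP)) ^ N). set (c := 1 + exp VP).
  assert (Hc : 0 < c) by (pose proof (exp_pos VP); unfold c; lra).
  pose proof (rho_bounds VP (1 / 2) ltac:(lra)) as [[Hrho2 ?] ?].
  assert (HK : 0 < K) by (apply pow_lt, Rmult_lt_0_compat; lra).
  eapply filter_imp; [|apply (at_right_0_lt (Rmin 1 (K / c))), Rmin_pos; [lra | apply Rdiv_lt_0_compat; lra]].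
  intros p [Hp0 Hpeta] s f Hsf.
  pose proof (Rmin_l 1 (K / c)) as Hmin1; pose proof (Rmin_r 1 (K / c)) as HminK.
  assert (Hp : 0 < p < 1) by lra.
  destruct f as [|f]; [apply pear_rule_no_failure, Hp|].
  destruct (pear_rule VP p s (S f)) eqn:Hrule; [exfalso | reflexivity].
  apply pear_rule_true_iff in Hrule; [|exact Hp | lia].
  pose proof (rho_bounds VP p Hp) as [[_ Hlt] Hrho1].
  assert (Hnum : K <= rho2 VP ^ s * (1 - rho2 VP) ^ S f).
  { unfold K. rewrite Rpow_mult_distr.
    apply Rmult_le_compat; try (apply pow_le; lra); apply pow_antimono; lra || lia. }
  assert (Hden : rho1 VP p ^ s * (1 - rho1 VP p) ^ S f <= 1 - rho1 VP p).
  { apply Rle_trans with (rho1 VP p ^ 0 * (1 - rho1 VP p) ^ 1); [|simpl; lra].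
    apply Rmult_le_compat; try (apply pow_le; lra); apply pow_antimono; lra || lia. }
  assert (Hsmall : 1 - rho1 VP p < K).
  { pose proof (one_sub_rho1_le VP p Hp0) as Hrho. fold c in Hrho.
    assert (HpK : p < K / c) by lra.
    apply Rmult_lt_compat_l with (r := c) in HpK; [|lra].
    replace (c * (K / c)) with K in HpK by (field; lra). lra. }
  unfold likelihood_ratio in Hrule. apply Rle_div_l in Hrule; [lra|].
  apply Rmult_lt_0_compat; apply pow_lt; lra.
Qed.

Lemma pear_low_lim rew VP dl :
  0 <= dl < 1 -> (forall v1 v2, 0 <= rew v1 v2) ->
  filterlim (fun p => real (Lim_seq (fun T => pear_val rew VP p dl vN_lo T 0 0))) (at_right 0)
    (locally (until_failure_rate (rew VP vN_lo) (rew VP VP) (prob_choose2 VP vN_lo) dl / (1 - dl))).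
Proof.
  intros Hdl Hrew.
  set (a := rew VP vN_lo). set (b := rew VP VP). set (q := prob_choose2 VP vN_lo).
  assert (Ha : 0 <= a) by apply Hrew. assert (Hb : 0 <= b) by apply Hrew.
  assert (Hq : 0 <= q <= 1) by (pose proof (prob_choose2_bounds VP vN_lo); unfold q; lra).
  assert (El : real (Lim_seq (fun T => explore_val until_failure a b q dl T 0 0))
               = until_failure_rate a b q dl / (1 - dl))
    by (rewrite (is_lim_seq_unique _ _ (is_lim_seq_until_failure a b q dl Ha Hb Hq Hdl)); reflexivity).
  apply filterlim_locally. intro eps.
  destruct (geom_tail_small (a + b) dl eps ltac:(lra) Hdl (cond_pos eps)) as [N HN].
  eapply filter_imp; [|apply (pear_rule_near_0 VP N)]. intros p Hagree.
  unfold ball; simpl; unfold AbsRing_ball, abs, minus, plus, opp; simpl.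
  rewrite pear_val_Lim, <- El. eapply Rle_lt_trans; [|exact HN].
  apply Lim_seq_dist_le; try apply ex_finite_lim_explore_val; try assumption.
  intro T. apply (explore_val_agree_dist a b q dl Ha Hb Hq Hdl (a + b) _ _ N); [lra | lra | |lia].
  exact Hagree.
Qed.

Lemma pear_high_eng_lim VP dl :
  0 <= dl < 1 ->
  filterlim (fun p => p * real (Lim_seq (fun T => pear_val prob_engage2 VP p dl (vN_hi p) T 0 0)))
    (at_right 0) (locally 0).
Proof.
  intro Hdl.
  apply (filterlim_le_le (fun _ => 0) _ (fun p => p * (1 / (1 - dl))) (Finite 0)).
  - eapply filter_imp; [|apply (at_right_0_lt 1); lra]. intros p Hp. rewrite pear_val_Lim.
    pose proof (prob_engage2_bounds VP (vN_hi p)); pose proof (prob_engage2_bounds VP VP).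
    pose proof (prob_choose2_bounds VP (vN_hi p)).
    set (a := prob_engage2 VP (vN_hi p)) in *. set (b := prob_engage2 VP VP) in *.
    set (q := prob_choose2 VP (vN_hi p)) in *.
    pose proof (explore_obj_ge0 a b q dl ltac:(lra) ltac:(lra) ltac:(lra) Hdl (pear_rule VP p) 0 0).
    pose proof (explore_obj_le a b q dl ltac:(lra) ltac:(lra) ltac:(lra) Hdl 1 (pear_rule VP p) 0 0
                  ltac:(lra) ltac:(lra)).
    split; apply Rmult_le_pos || apply Rmult_le_compat_l; lra.
  - apply filterlim_const.
  - replace 0 with (0 * (1 / (1 - dl))) at 2 by ring.
    apply (filterlim_within_continuity (fun p => p * (1 / (1 - dl)))). reg.
Qed.

(* The utility of a high niche item is [V_N = (1 - p) / p + O(1)], and PEAR keeps recommending it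
   with success probability [rho1 = 1 - O(p)]. *)
Lemma pear_high_util_bounds VP dl p :
  0 <= dl < 1 -> 0 < p < 1 ->
  (1 - p) / (1 - dl + dl * (1 + exp VP) * p)
  <= p * real (Lim_seq (fun T => pear_val exp_max_util2 VP p dl (vN_hi p) T 0 0))
  <= (1 - p + p * (1 + exp VP + exp_max_util2 VP VP)) / (1 - dl).
Proof.
  intros Hdl Hp. rewrite pear_val_Lim.
  set (c := 1 + exp VP). set (b := exp_max_util2 VP VP).
  set (h := vN_hi p). set (A := exp_max_util2 VP h). set (rho := prob_choose2 VP h).
  assert (Hc : 0 < c) by (unfold c; pose proof (exp_pos VP); lra).
  assert (Hb : 0 < b) by apply exp_max_util2_pos.
  assert (Hrho : 0 < rho < 1) by apply prob_choose2_bounds.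
  assert (Hrho1 : 1 - rho <= c * p) by exact (one_sub_rho1_le VP p (proj1 Hp)).
  assert (Hph : p * h = 1 - p) by (unfold h, vN_hi; field; lra).
  assert (Heh : 1 <= exp h).
  { pose proof (exp_vN_hi_ge p (proj1 Hp)) as Hinv.
    assert (1 <= / p) by (rewrite <- Rinv_1; apply Rinv_le_contravar; lra). fold h in Hinv. lra. }
  assert (HA : h <= A <= h + c).
  { unfold A, exp_max_util2, denom2. pose proof (exp_pos VP). pose proof (exp_ineq1_le c).
    rewrite <- (ln_exp h) at 1. rewrite <- (ln_exp (h + c)), exp_plus.
    split; apply ln_le; fold c; nra. }
  assert (HA0 : 0 <= A) by (apply Rlt_le, exp_max_util2_pos).
  set (V := explore_obj (pear_rule VP p) A b rho dl 0 0).
  assert (HV_lo : A / (1 - dl * rho) <= V).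
  { apply explore_obj_ge_no_failure; try lra. intro s'. apply pear_rule_no_failure, Hp. }
  assert (HV_hi : V <= (A + b) / (1 - dl)) by (apply explore_obj_le; lra).
  split.
  - apply Rle_trans with (p * (A / (1 - dl * rho))); [|apply Rmult_le_compat_l; lra].
    assert (Hdr : 0 < 1 - dl * rho) by nra.
    replace (p * (A / (1 - dl * rho))) with (p * A / (1 - dl * rho)) by (field; lra).
    apply Rdiv_le_compat; nra.
  - apply Rle_trans with (p * ((A + b) / (1 - dl))); [apply Rmult_le_compat_l; lra|].
    replace (p * ((A + b) / (1 - dl))) with ((p * A + p * b) / (1 - dl)) by (field; lra).
    apply Rdiv_le_compat; nra.
Qed.

Lemma pear_high_util_lim VP dl :
  0 <= dl < 1 ->
  filterlim (fun p => p * real (Lim_seq (fun T => pear_val exp_max_util2 VP p dl (vN_hi p) T 0 0)))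
    (at_right 0) (locally (1 / (1 - dl))).
Proof.
  intro Hdl. set (c := 1 + exp VP). set (b := exp_max_util2 VP VP).
  assert (Hc : 0 < c) by (unfold c; pose proof (exp_pos VP); lra).
  apply (filterlim_le_le (fun p => (1 - p) / (1 - dl + dl * c * p)) _
           (fun p => (1 - p + p * (c + b)) / (1 - dl)) (Finite (1 / (1 - dl)))).
  - eapply filter_imp; [|apply (at_right_0_lt 1); lra].
    intros p Hp. exact (pear_high_util_bounds VP dl p Hdl Hp).
  - replace (Finite (1 / (1 - dl))) with (Finite ((1 - 0) / (1 - dl + dl * c * 0)))
      by (f_equal; field; lra).
    apply (filterlim_within_continuity (fun p => (1 - p) / (1 - dl + dl * c * p))). reg; lra.
  - replace (Finite (1 / (1 - dl))) with (Finite ((1 - 0 + 0 * (c + b)) / (1 - dl)))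
      by (f_equal; field; lra).
    apply (filterlim_within_continuity (fun p => (1 - p + p * (c + b)) / (1 - dl))). reg; lra.
Qed.

Lemma pear_app_ratio_lim rew VP dl l_hi :
  0 <= dl < 1 -> (forall v1 v2, 0 <= rew v1 v2) -> 0 < rew VP VP ->
  filterlim (fun p => p * real (Lim_seq (fun T => pear_val rew VP p dl (vN_hi p) T 0 0)))
    (at_right 0) (locally l_hi) ->
  filterlim (fun p => pear_obj rew VP dl p / app_obj rew VP dl) (at_right 0)
    (locally (((1 - dl) * l_hi
               + until_failure_rate (rew VP vN_lo) (rew VP VP) (prob_choose2 VP vN_lo) dl)
              / rew VP VP)).
Proof.
  intros Hdl Hrew Hb Hhigh. rewrite app_obj_eq by exact Hdl. unfold pear_obj.
  set (r := until_failure_rate (rew VP vN_lo) (rew VP VP) (prob_choose2 VP vN_lo) dl).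
  assert (Hsurv : filterlim (fun p => 1 - p) (at_right 0) (locally (1 - 0)))
    by (apply (filterlim_within_continuity (fun p => 1 - p)); reg).
  rewrite Rminus_0_r in Hsurv.
  replace (((1 - dl) * l_hi + r) / rew VP VP)
    with ((l_hi + 1 * (r / (1 - dl))) * (/ rew VP VP * (1 - dl))) by (field; lra).
  apply (filterlim_ext (fun p =>
    (p * real (Lim_seq (fun T => pear_val rew VP p dl (vN_hi p) T 0 0))
     + (1 - p) * real (Lim_seq (fun T => pear_val rew VP p dl vN_lo T 0 0)))
    * (/ rew VP VP * (1 - dl)))).
  { intro p. field. lra. }
  apply filterlim_Rmult; [|apply filterlim_const].
  apply filterlim_Rplus; [exact Hhigh|].
  apply filterlim_Rmult; [exact Hsurv|]. apply pear_low_lim; assumption.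
Qed.

Lemma until_failure_rate_at_left_1 a b q :
  q <> 1 -> filterlim (until_failure_rate a b q) (at_left 1) (locally b).
Proof.
  intro Hq.
  assert (E : until_failure_rate a b q 1 = b) by (unfold until_failure_rate; field; lra).
  rewrite <- E at 2. apply filterlim_within_continuity.
  unfold until_failure_rate. reg. lra.
Qed.

Theorem corollary2 (VP : R) (HVP : 0 <= VP) :
  (exists L : R -> R,
     (forall delta, 0 <= delta < 1 ->
        filterlim (fun p => Eng_PEAR VP delta p / Eng_APP VP delta)
                  (at_right 0) (locally (L delta)))
     /\ filterlim L (at_left 1) (locally 1))
  /\
  (exists L : R -> R,
     (forall delta, 0 <= delta < 1 ->
        filterlim (fun p => Util_PEAR VP delta p / Util_APP VP delta)
                  (at_right 0) (locally (L delta)))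
     /\ filterlim L (at_left 1) (locally (1 + 1 / ln (1 + 2 * exp VP)))).
Proof.
  set (q := prob_choose2 VP vN_lo).
  assert (Hq : q <> 1) by (pose proof (prob_choose2_bounds VP vN_lo); unfold q; lra).
  split.
  - set (b := prob_engage2 VP VP).
    assert (Hb : 0 < b) by apply prob_engage2_bounds.
    exists (fun dl => until_failure_rate (prob_engage2 VP vN_lo) b q dl / b). split.
    + intros dl Hdl.
      pose proof (pear_app_ratio_lim prob_engage2 VP dl 0 Hdl
                    (fun v1 v2 => Rlt_le _ _ (proj1 (prob_engage2_bounds v1 v2))) Hb
                    (pear_high_eng_lim VP dl Hdl)) as Hlim.
      rewrite Rmult_0_r, Rplus_0_l in Hlim. exact Hlim.
    + replace (locally 1) with (locally (b * / b)) by (f_equal; field; lra).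
      apply filterlim_Rmult; [apply until_failure_rate_at_left_1, Hq | apply filterlim_const].
  - set (b := exp_max_util2 VP VP).
    assert (Hb : 0 < b) by apply exp_max_util2_pos.
    exists (fun dl => (1 + until_failure_rate (exp_max_util2 VP vN_lo) b q dl) / b). split.
    + intros dl Hdl.
      pose proof (pear_app_ratio_lim exp_max_util2 VP dl (1 / (1 - dl)) Hdl
                    (fun v1 v2 => Rlt_le _ _ (exp_max_util2_pos v1 v2)) Hb
                    (pear_high_util_lim VP dl Hdl)) as Hlim.
      replace ((1 - dl) * (1 / (1 - dl))) with 1 in Hlim by (field; lra). exact Hlim.
    + replace (ln (1 + 2 * exp VP)) with b
        by (unfold b, exp_max_util2, denom2; f_equal; ring).
      replace (1 + 1 / b) with ((1 + b) * / b) by (field; lra).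
      apply filterlim_Rmult; [|apply filterlim_const].
      apply filterlim_Rplus; [apply filterlim_const | apply until_failure_rate_at_left_1, Hq].
Qed.
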